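(* Let $\mathsf{V}$ be a congruence distributive variety of $\mathcal{L}$-algebras that has the congruence extension property and a guarded deduction theorem. If $\mathrm{Th}(\mathsf{V})$ has a model completion, then $\mathsf{V}$ has equationally definable principal congruences.
   Context: $\mathcal{L}$ is an algebraic first-order language with at least one constant symbol. For a class $\mathsf{K}$ and a formula $\alpha$ with free variables, $\mathsf{K}\models\alpha$ means every member satisfies $\alpha$ under every assignment. A model completion of a theory $T$ is a model complete theory $T^*$ with the same universal consequences as $T$ such that for every model $M$ of $T$, $T^*$ plus the diagram of $M$ is complete. $\mathsf{V}$ has the congruence extension property if for every $\mathbf{A}\in\mathsf{V}$, every congruence of a subalgebra of $\mathbf{A}$ is the restriction of a congruence of $\mathbf{A}$. $\mathsf{V}$ has equationally definable principal congruences if there is a conjunction of equations $\alpha(x_1,x_2,y_1,y_2)$ such that for all $\mathbf{A}\in\mathsf{V}$, $a_1,a_2,b_1,b_2\in A$: $(a_1,a_2)\in\mathrm{Cg}^{\mathbf{A}}(b_1,b_2)$ iff $\mathbf{A}\models\alpha(a_1,a_2,b_1,b_2)$, where $\mathrm{Cg}^{\mathbf{A}}(b_1,b_2)$ is the congruence of $\mathbf{A}$ generated by $(b_1,b_2)$. $\mathsf{V}$ has a guarded deduction theorem if there exist conjunctions of equations $\gamma(x_1,x_2,y_1,y_2,\overline{z})$ and $\varphi(x_1,x_2,y_1,y_2,\overline{z})$ (with $\overline{z}$ a finite set of variables) such that for every finite set of variables $\overline{w}$ with $\overline{w}\cap\overline{z}=\emptyset$, all terms $s_1,s_2,t_1,t_2$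 in the variables $\overline{w}$, and every conjunction of equations $\pi(\overline{w})$: (i) $\mathsf{V}\models(\pi\mathbin{\&}t_1\approx t_2)\to s_1\approx s_2$ iff $\mathsf{V}\models\pi\to\forall\overline{z}.(\gamma\to\varphi)(s_1,s_2,t_1,t_2,\overline{z})$; and (ii) for every equation $\sigma(\overline{w})$, $\mathsf{V}\models(\pi\mathbin{\&}\gamma(s_1,s_2,t_1,t_2,\overline{z}))\to\sigma$ iff $\mathsf{V}\models\pi\to\sigma$. *)

From mathcomp Require Import all_boot.
Set Warnings "-notation-overridden".
Set Implicit Arguments. Unset Strict Implicit. Unset Printing Implicit Defensive.

Record language := Language { sym : Type; ar : sym -> nat }.

Record algebra (L : language) := Algebra {
  carrier :> Type;
  op : forall s : sym L, ('I_(ar s) -> carrier) -> carrier }.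
Arguments op {L} _ s _.

Inductive term (L : language) (X : Type) : Type :=
| Var : X -> term L X
| App : forall s : sym L, ('I_(ar s) -> term L X) -> term L X.
Arguments Var {L X} _.
Arguments App {L X} s _.

Fixpoint eval (L : language) (A : algebra L) (X : Type) (e : X -> A)
  (t : term L X) : A :=
  match t with
  | Var x => e x
  | App s f => op A s (fun i => eval e (f i))
  end.

Fixpoint tmap (L : language) (X Y : Type) (f : X -> Y) (t : term L X) : term L Y :=
  match t with
  | Var x => Var (f x)
  | App s g => App s (fun i => tmap f (g i))
  end.

Fixpoint occurs_t (L : language) (X : Type) (x : X) (t : term L X) : Prop :=
  match t with
  | Var y => y = x
  | App s f => exists i, occurs_t x (f i)
  end.

Definition holds (L : language) (A : algebra L) (X : Type) (e : X -> A)
  (pi : seq (term L X * term L X)) : Prop :=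
  foldr (fun p P => eval e p.1 = eval e p.2 /\ P) True pi.

(* the assignment x1,x2,y1,y2 |-> a1,a2,b1,b2 *)
Definition asg4 (A : Type) (a1 a2 b1 b2 : A) : 'I_4 -> A :=
  fun i => nth a1 [:: a1; a2; b1; b2] i.

Definition is_variety (L : language) (V : algebra L -> Prop) : Prop :=
  exists E : term L nat * term L nat -> Prop,
    forall A : algebra L, V A <->
      (forall p, E p -> forall e : nat -> A, eval e p.1 = eval e p.2).

(* R restricted to the subset P is a congruence of the subalgebra with universe P. *)
Definition congruence_on (L : language) (A : algebra L) (P : A -> Prop)
  (R : A -> A -> Prop) : Prop :=
  [/\ (forall x, P x -> R x x),
      (forall x y, P x -> P y -> R x y -> R y x),
      (forall x y z, P x -> P y -> P z -> R x y -> R y z -> R x z) &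
      (forall (s : sym L) (f g : 'I_(ar s) -> A),
          (forall i, P (f i)) -> (forall i, P (g i)) ->
          (forall i, R (f i) (g i)) -> R (op A s f) (op A s g))].

Definition congruence (L : language) (A : algebra L) (R : A -> A -> Prop) : Prop :=
  congruence_on (fun _ => True) R.

Definition Cg (L : language) (A : algebra L) (S : A -> A -> Prop) : A -> A -> Prop :=
  fun x y => forall R, congruence R -> (forall a b, S a b -> R a b) -> R x y.

Definition subuniverse (L : language) (A : algebra L) (P : A -> Prop) : Prop :=
  forall (s : sym L) (f : 'I_(ar s) -> A), (forall i, P (f i)) -> P (op A s f).

(* Congruence distributivity: every Con A (A in V) is a distributive lattice
   (meet = intersection, join = generated congruence of the union). *)
Definition congruence_distributive (L : language) (V : algebra L -> Prop) : Prop :=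
  forall A : algebra L, V A ->
  forall th ph ps : A -> A -> Prop,
    congruence th -> congruence ph -> congruence ps ->
    forall x y,
      (th x y /\ Cg (fun a b => ph a b \/ ps a b) x y) <->
      Cg (fun a b => (th a b /\ ph a b) \/ (th a b /\ ps a b)) x y.

Definition CEP (L : language) (V : algebra L -> Prop) : Prop :=
  forall A : algebra L, V A ->
  forall P : A -> Prop, subuniverse P ->
  forall R : A -> A -> Prop, congruence_on P R ->
  exists Th : A -> A -> Prop, congruence Th /\
    (forall x y, P x -> P y -> (R x y <-> Th x y)).

Definition EDPC (L : language) (V : algebra L -> Prop) : Prop :=
  exists alpha : seq (term L 'I_4 * term L 'I_4),
    forall A : algebra L, V A -> forall a1 a2 b1 b2 : A,
      Cg (fun x y => x = b1 /\ y = b2) a1 a2 <-> holds (asg4 a1 a2 b1 b2) alpha.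

(* assignment for gamma/phi(s1,s2,t1,t2,z) : variables x1,x2,y1,y2 (inl) and z (inr) *)
Definition gasg (L : language) (A : algebra L) (n k : nat) (e : 'I_n -> A)
  (s1 s2 t1 t2 : term L 'I_n) (z : 'I_k -> A) : 'I_4 + 'I_k -> A :=
  fun v => match v with
           | inl i => asg4 (eval e s1) (eval e s2) (eval e t1) (eval e t2) i
           | inr j => z j
           end.

(* Guarded deduction theorem.  The variables z are 'I_k; the variables w are
   'I_n (disjointness from z is built in by using separate variable types). *)
Definition guarded_deduction_theorem (L : language) (V : algebra L -> Prop) : Prop :=
  exists (k : nat) (gamma phi : seq (term L ('I_4 + 'I_k) * term L ('I_4 + 'I_k))),
  forall (n : nat) (s1 s2 t1 t2 : term L 'I_n) (pi : seq (term L 'I_n * term L 'I_n)),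
    ((forall A : algebra L, V A -> forall e : 'I_n -> A,
         holds e pi -> eval e t1 = eval e t2 -> eval e s1 = eval e s2)
     <->
     (forall A : algebra L, V A -> forall e : 'I_n -> A,
         holds e pi -> forall z : 'I_k -> A,
           holds (gasg e s1 s2 t1 t2 z) gamma -> holds (gasg e s1 s2 t1 t2 z) phi))
    /\
    (forall sigma : term L 'I_n * term L 'I_n,
       (forall A : algebra L, V A -> forall (e : 'I_n -> A) (z : 'I_k -> A),
           holds e pi -> holds (gasg e s1 s2 t1 t2 z) gamma ->
           eval e sigma.1 = eval e sigma.2)
       <->
       (forall A : algebra L, V A -> forall e : 'I_n -> A,
           holds e pi -> eval e sigma.1 = eval e sigma.2)).

(* Formulas of L expanded by new constants C; variables are nat. *)
Inductive fm (L : language) (C : Type) : Type :=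
| FEq : term L (nat + C) -> term L (nat + C) -> fm L C
| FBot : fm L C
| FNeg : fm L C -> fm L C
| FAnd : fm L C -> fm L C -> fm L C
| FOr : fm L C -> fm L C -> fm L C
| FImp : fm L C -> fm L C -> fm L C
| FAll : nat -> fm L C -> fm L C
| FEx : nat -> fm L C -> fm L C.
Arguments FBot {L C}.

Definition sum_mapr (C D : Type) (f : C -> D) (v : nat + C) : nat + D :=
  match v with inl n => inl n | inr c => inr (f c) end.

Fixpoint fm_map (L : language) (C D : Type) (f : C -> D) (p : fm L C) : fm L D :=
  match p with
  | FEq t1 t2 => FEq (tmap (sum_mapr f) t1) (tmap (sum_mapr f) t2)
  | FBot => FBot
  | FNeg q => FNeg (fm_map f q)
  | FAnd q r => FAnd (fm_map f q) (fm_map f r)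
  | FOr q r => FOr (fm_map f q) (fm_map f r)
  | FImp q r => FImp (fm_map f q) (fm_map f r)
  | FAll n q => FAll n (fm_map f q)
  | FEx n q => FEx n (fm_map f q)
  end.

Definition env (A C : Type) (e : nat -> A) (c : C -> A) (v : nat + C) : A :=
  match v with inl n => e n | inr k => c k end.

Definition upd (A : Type) (e : nat -> A) (n : nat) (a : A) : nat -> A :=
  fun m => if m == n then a else e m.

Fixpoint sat (L : language) (A : algebra L) (C : Type) (c : C -> A)
  (e : nat -> A) (p : fm L C) : Prop :=
  match p with
  | FEq t1 t2 => eval (env e c) t1 = eval (env e c) t2
  | FBot => False
  | FNeg q => ~ sat c e q
  | FAnd q r => sat c e q /\ sat c e r
  | FOr q r => sat c e q \/ sat c e r
  | FImp q r => sat c e q -> sat c e r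
  | FAll n q => forall a : A, sat c (upd e n a) q
  | FEx n q => exists a : A, sat c (upd e n a) q
  end.

Fixpoint free_in (L : language) (C : Type) (n : nat) (p : fm L C) : Prop :=
  match p with
  | FEq t1 t2 => occurs_t (inl n) t1 \/ occurs_t (inl n) t2
  | FBot => False
  | FNeg q => free_in n q
  | FAnd q r | FOr q r | FImp q r => free_in n q \/ free_in n r
  | FAll m q | FEx m q => n <> m /\ free_in n q
  end.

Definition sentence (L : language) (C : Type) (p : fm L C) : Prop :=
  forall n, ~ free_in n p.

Inductive qfree (L : language) (C : Type) : fm L C -> Prop :=
| qf_eq t1 t2 : qfree (FEq t1 t2)
| qf_bot : qfree FBot
| qf_neg q : qfree q -> qfree (FNeg q)
| qf_and q r : qfree q -> qfree r -> qfree (FAnd q r)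
| qf_or q r : qfree q -> qfree r -> qfree (FOr q r)
| qf_imp q r : qfree q -> qfree r -> qfree (FImp q r).

Inductive universal (L : language) (C : Type) : fm L C -> Prop :=
| univ_qf q : qfree q -> universal q
| univ_all n q : universal q -> universal (FAll n q).

(* Theories (sets of formulas; a model satisfies their universal closures). *)
Definition models (L : language) (A : algebra L) (C : Type) (c : C -> A)
  (T : fm L C -> Prop) : Prop :=
  forall p, T p -> forall e : nat -> A, sat c e p.

Definition entails (L : language) (C : Type) (T : fm L C -> Prop) (p : fm L C) : Prop :=
  forall (B : algebra L) (c : C -> B), models c T -> forall e : nat -> B, sat c e p.

Definition complete (L : language) (C : Type) (T : fm L C -> Prop) : Prop :=
  (exists (B : algebra L) (c : C -> B), models c T) /\
  (forall p, sentence p -> entails T p \/ entails T (FNeg p)).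

Definition vd (A : Type) : void -> A := fun v => match v with end.

Definition Th (L : language) (V : algebra L -> Prop) : fm L void -> Prop :=
  fun p => sentence p /\ forall A : algebra L, V A -> forall e : nat -> A, sat (vd A) e p.

Definition model_complete (L : language) (T : fm L void -> Prop) : Prop :=
  forall (A B : algebra L), models (vd A) T -> models (vd B) T ->
  forall h : A -> B, injective h ->
    (forall (s : sym L) (f : 'I_(ar s) -> A), h (op A s f) = op B s (fun i => h (f i))) ->
    forall (p : fm L void) (e : nat -> A), sat (vd A) e p <-> sat (vd B) (fun n => h (e n)) p.

Definition diagram (L : language) (M : algebra L) : fm L M -> Prop :=
  fun p => exists t1 t2 : term L M,
    (p = FEq (tmap inr t1) (tmap inr t2) /\ eval id t1 = eval id t2) \/
    (p = FNeg (FEq (tmap inr t1) (tmap inr t2)) /\ eval id t1 <> eval id t2).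

Definition model_completion (L : language) (T Ts : fm L void -> Prop) : Prop :=
  [/\ model_complete Ts,
      (forall p, sentence p -> universal p -> (entails T p <-> entails Ts p)) &
      (forall M : algebra L, models (vd M) T ->
         complete (fun p : fm L M =>
                     (exists q, Ts q /\ p = fm_map (vd M) q) \/ @diagram L M p))].

(* Write K (pcg_quad below) for the class of quadruples (A, a1, a2, b1, b2)
   with A in V and (a1, a2) in Cg(b1, b2).  K is closed under homomorphic
   images, under finite products (by congruence distributivity) and, by CEP,
   under passing from a member to any quadruple of V satisfying all the
   4-variable equations the member satisfies.  If moreover K and its complement
   in V are closed under ultraproducts, a compactness argument shows that K is
   cut out in V by finitely many equations, which is EDPC.

   Both closures come from the guarded deduction theorem.  Let
   Psi := forall z, gamma -> phi.  Membership in K implies Psi throughout V,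
   and a non-member embeds into a member of V in which some z satisfies gamma
   but not phi.  Model completeness pulls such a z back into any model of the
   model completion Ts, so in these models Psi implies membership in K.  Every
   member of V embeds into a model of Ts, models of Ts are closed under
   ultraproducts by Los's theorem, and membership in K is preserved by
   homomorphisms and reflected by embeddings. *)

From Stdlib Require List.
From Stdlib Require Import ClassicalEpsilon FunctionalExtensionality.
From Stdlib Require Import PropExtensionality ProofIrrelevance.
From mathcomp Require Import all_boot.
From mathcomp Require classical_sets filter.
Set Implicit Arguments. Unset Strict Implicit. Unset Printing Implicit Defensive.

Lemma dep_choice (I : Type) (X : I -> Type) (P : forall i, X i -> Prop) :
  (forall i, exists x, P i x) -> exists f : forall i, X i, forall i, P i (f i).
Proof.
move=> H; exists (fun i => proj1_sig (constructive_indefinite_description _ (H i))).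
by move=> i; case: (constructive_indefinite_description _ _).
Qed.

Lemma In_enum_ord n (i : 'I_n) : List.In i (enum 'I_n).
Proof.
have : i \in enum 'I_n by rewrite mem_enum.
by elim: (enum 'I_n) => //= j s IH; rewrite in_cons => /orP [/eqP ->|/IH]; [left|right].
Qed.

Lemma In_cat T (x : T) (s1 s2 : seq T) : List.In x (s1 ++ s2) <-> List.In x s1 \/ List.In x s2.
Proof. by elim: s1 => [|y s1 IH] /=; [tauto|rewrite IH; tauto]. Qed.

Lemma asg4_map (A B : Type) (f : A -> B) a1 a2 b1 b2 i :
  f (asg4 a1 a2 b1 b2 i) = asg4 (f a1) (f a2) (f b1) (f b2) i.
Proof. by case: i => [[|[|[|[|m]]]] Hi]. Qed.

Lemma finite_reindex (X : Type) (x0 : X) (l : seq X) :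
  exists n (idx : X -> 'I_n) (w : 'I_n -> X), forall x, List.In x l -> w (idx x) = x.
Proof.
elim: l => [|x l [n [idx [w IH]]]]; first by exists 1, (fun _ => ord0), (fun _ => x0).
exists n.+1,
  (fun y => if excluded_middle_informative (y = x) then ord_max else lift ord_max (idx y)),
  (fun i => if unlift ord_max i is Some j then w j else x).
move=> y Hy; case: excluded_middle_informative => [Eyx|Hyx]; first by rewrite unlift_none Eyx.
by rewrite liftK; apply: IH; case: Hy => // Exy; case: Hyx.
Qed.

Definition join_asg X Y T (f : X -> T) (g : Y -> T) (v : X + Y) : T :=
  match v with inl x => f x | inr y => g y end.

Definition vx1 : 'I_4 := @Ordinal 4 0 isT.
Definition vx2 : 'I_4 := @Ordinal 4 1 isT.
Definition vy1 : 'I_4 := @Ordinal 4 2 isT.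
Definition vy2 : 'I_4 := @Ordinal 4 3 isT.

(** * Algebras, terms and congruences *)

Section Algebras.
Variable L : language.
Implicit Types A B : algebra L.

Lemma eval_tmap A X Y (f : X -> Y) (e : Y -> A) (t : term L X) :
  eval e (tmap f t) = eval (fun x => e (f x)) t.
Proof.
elim: t => [x|s g IH] //=; congr (op A s); apply: functional_extensionality => i; exact: IH.
Qed.

Lemma eq_eval A X (e e' : X -> A) (t : term L X) :
  (forall x, occurs_t x t -> e x = e' x) -> eval e t = eval e' t.
Proof.
elim: t => [x|s g IH] /= H; first exact: H.
congr (op A s); apply: functional_extensionality => i; apply: IH => x Hx; apply: H; by exists i.
Qed.

Fixpoint tvars X (t : term L X) : seq X :=
  match t with
  | Var x => [:: x]
  | App s f => List.flat_map (fun i => tvars (f i)) (enum 'I_(ar s))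
  end.

Lemma occurs_tvars X (x : X) (t : term L X) : occurs_t x t -> List.In x (tvars t).
Proof.
elim: t => [y|s f IH] /= => [->|[i /IH Hx]]; first by left.
by apply/List.in_flat_map; exists i; split=> //; exact: In_enum_ord.
Qed.

Lemma occurs_tmap X Y (f : X -> Y) (y : Y) (t : term L X) :
  occurs_t y (tmap f t) -> exists2 x, f x = y & occurs_t x t.
Proof.
elim: t => [x|s g IH] /= => [<-|[i /IH [x Ex Hx]]]; first by exists x.
by exists x => //; exists i.
Qed.

Definition hom A B (h : A -> B) :=
  forall s (f : 'I_(ar s) -> A), h (op A s f) = op B s (fun i => h (f i)).

Lemma eval_hom A B (h : A -> B) X (e : X -> A) (t : term L X) :
  hom h -> h (eval e t) = eval (fun x => h (e x)) t.
Proof.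
move=> hh; elim: t => [x|s g IH] //=; rewrite hh; congr (op B s).
apply: functional_extensionality => i; exact: IH.
Qed.

Lemma hom_comp A B (C : algebra L) (h : A -> B) (g : B -> C) :
  hom h -> hom g -> hom (fun x => g (h x)).
Proof. by move=> hh hg s f; rewrite hh hg. Qed.

Lemma holdsP A X (e : X -> A) pi :
  holds e pi <-> forall p, List.In p pi -> eval e p.1 = eval e p.2.
Proof.
elim: pi => [|p pi IH] /=; first by split.
split=> [[Hp /IH Hpi] q [<-|Hq] //|H]; first exact: Hpi.
by split; [apply: H; left|apply/IH => q Hq; apply: H; right].
Qed.

Lemma holds_cat A X (e : X -> A) pi1 pi2 :
  holds e (pi1 ++ pi2) <-> holds e pi1 /\ holds e pi2.
Proof. by elim: pi1 => [|p pi1 IH] /=; [tauto|rewrite IH; tauto]. Qed.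

Lemma holds_sub A X (e : X -> A) pi pi' :
  (forall p, List.In p pi -> List.In p pi') -> holds e pi' -> holds e pi.
Proof. by move=> S /holdsP H; apply/holdsP => p /S /H. Qed.

Definition map_eqs X Y (f : X -> Y) (pi : seq (term L X * term L X)) :=
  map (fun p => (tmap f p.1, tmap f p.2)) pi.

Lemma holds_map_eqs A X Y (f : X -> Y) (e : Y -> A) pi :
  holds e (map_eqs f pi) <-> holds (fun x => e (f x)) pi.
Proof. by elim: pi => [|p pi IH] //=; rewrite !eval_tmap IH. Qed.

Lemma holds_hom A B (h : A -> B) X (e : X -> A) pi :
  hom h -> holds e pi -> holds (fun x => h (e x)) pi.
Proof.
move=> hh; elim: pi => [|p pi IH] //= [Hp Hpi]; split; last exact: IH.
by rewrite -!eval_hom // Hp.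
Qed.

Lemma holds_emb A B (h : A -> B) X (e : X -> A) pi :
  hom h -> injective h -> holds (fun x => h (e x)) pi -> holds e pi.
Proof.
move=> hh ih; elim: pi => [|p pi IH] //= [Hp Hpi]; split; last exact: IH.
by apply: ih; rewrite !eval_hom.
Qed.

Section CongruenceLaws.
Variables (A : algebra L) (R : A -> A -> Prop).
Hypothesis congR : congruence R.

Lemma cong_refl x : R x x.
Proof. by case: congR => h _ _ _; exact: h. Qed.
Lemma cong_sym x y : R x y -> R y x.
Proof. by case: congR => _ h _ _; exact: h. Qed.
Lemma cong_trans x y z : R x y -> R y z -> R x z.
Proof. by case: congR => _ _ h _; exact: h. Qed.
Lemma cong_op s (f g : 'I_(ar s) -> A) :
  (forall i, R (f i) (g i)) -> R (op A s f) (op A s g).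
Proof. by case: congR => _ _ _ h; exact: h. Qed.

End CongruenceLaws.

Lemma congruence_ker A B (h : A -> B) : hom h -> congruence (fun x y => h x = h y).
Proof.
move=> hh; split=> [//|x y _ _ -> //|x y z _ _ _ -> //|s f g _ _ Hfg].
by rewrite !hh; congr (op B s); apply: functional_extensionality.
Qed.

Section Quotient.
Variables (A : algebra L) (R : A -> A -> Prop).
Hypothesis congR : congruence R.

Definition quot_carrier := {P : A -> Prop | exists x, P = R x}.
Definition qclass (x : A) : quot_carrier := exist _ (R x) (ex_intro _ x erefl).
Definition qrepr (c : quot_carrier) : A :=
  proj1_sig (constructive_indefinite_description _ (proj2_sig c)).

Lemma qclass_eq x y : qclass x = qclass y <-> R x y.
Proof.
split=> [[->]|Rxy]; first exact: cong_refl.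
have ERxy : R x = R y.
  apply: functional_extensionality => z; apply: propositional_extensionality.
  by split; [apply: cong_trans (cong_sym congR Rxy)|apply: cong_trans Rxy].
by apply: eq_exist_uncurried; exists ERxy; exact: proof_irrelevance.
Qed.

Lemma qreprK c : qclass (qrepr c) = c.
Proof.
rewrite /qrepr; case: (constructive_indefinite_description _ _) => x /= Ex.
case: c Ex => P HP /= Ex; subst P.
by apply: eq_exist_uncurried; exists erefl; exact: proof_irrelevance.
Qed.

Lemma qclass_surj c : exists x, c = qclass x.
Proof. by exists (qrepr c); rewrite qreprK. Qed.

Lemma qreprR x : R (qrepr (qclass x)) x.
Proof. by apply/qclass_eq; rewrite qreprK. Qed.

Definition quot_alg : algebra L :=
  @Algebra L quot_carrier (fun s F => qclass (op A s (fun i => qrepr (F i)))).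

Lemma qclass_hom : hom (B := quot_alg) qclass.
Proof.
move=> s f /=; apply/qclass_eq; apply: cong_op => // i.
by apply: cong_sym => //; exact: qreprR.
Qed.

Lemma eval_qclass X (e : X -> A) t :
  eval (A := quot_alg) (fun x => qclass (e x)) t = qclass (eval e t).
Proof. by rewrite (eval_hom _ _ qclass_hom). Qed.

Lemma eval_quot X (e : X -> quot_alg) t : eval e t = qclass (eval (fun x => qrepr (e x)) t).
Proof.
rewrite -eval_qclass; congr eval; apply: functional_extensionality => x; by rewrite qreprK.
Qed.

End Quotient.

Definition term_alg (X : Type) : algebra L := @Algebra L (term L X) (@App L X).

Lemma eval_subst A X Y (s : Y -> term L X) (e : X -> A) (t : term L Y) :
  eval e (eval (A := term_alg X) s t) = eval (fun y => eval e (s y)) t.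
Proof.
elim: t => [y|s' g IH] //=; congr (op A s'); apply: functional_extensionality => i; exact: IH.
Qed.

Lemma eval_term_alg_var X Y (f : Y -> X) (t : term L Y) :
  eval (A := term_alg X) (fun y => Var (f y)) t = tmap f t.
Proof.
elim: t => [y|s g IH] //=; congr (App s); apply: functional_extensionality => i; exact: IH.
Qed.

Lemma eval_term_hom A X (e : X -> A) : hom (A := term_alg X) (eval e).
Proof. by []. Qed.

Lemma image_subuniverse A B (h : A -> B) : hom h -> subuniverse (fun y => exists x, h x = y).
Proof.
move=> hh s f /choice [g Hg].
by exists (op A s g); rewrite hh; congr (op B s); apply: functional_extensionality.
Qed.

Section Subalgebra.
Variables (A : algebra L) (P : A -> Prop).
Hypothesis subP : subuniverse P.

Definition sub_alg : algebra L :=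
  @Algebra L {x | P x} (fun s f => exist _ (op A s (fun i => proj1_sig (f i)))
                                         (subP (fun i => proj2_sig (f i)))).

Lemma sub_val_hom : hom (A := sub_alg) (fun x => proj1_sig x).
Proof. by []. Qed.

Lemma sub_val_inj : injective (fun x : sub_alg => proj1_sig x).
Proof. move=> [x Hx] [y Hy] /= E; subst; congr exist; exact: proof_irrelevance. Qed.

End Subalgebra.

Definition gen_alg A X (g : X -> A) := sub_alg (image_subuniverse (eval_term_hom g)).

Definition gen A X (g : X -> A) (x : X) : gen_alg g := exist _ (g x) (ex_intro _ (Var x) erefl).

Definition unit_alg : algebra L := @Algebra L unit (fun _ _ => tt).

Definition prod_alg A B : algebra L :=
  @Algebra L (A * B) (fun s f => (op A s (fun i => (f i).1), op B s (fun i => (f i).2))).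

Lemma eval_prod A B X (e : X -> prod_alg A B) t :
  eval e t = (eval (fun x => (e x).1) t, eval (fun x => (e x).2) t).
Proof.
elim: t => [x|s g IH] /=; first by case: (e x).
by congr pair; congr (op _ s); apply: functional_extensionality => i; rewrite IH.
Qed.

Definition pi_alg (I : Type) (A : I -> algebra L) : algebra L :=
  @Algebra L (forall i, A i) (fun s f i => op (A i) s (fun j => f j i)).

Lemma eval_pi (I : Type) (A : I -> algebra L) X (e : X -> pi_alg A) t i :
  eval e t i = eval (fun x => e x i) t.
Proof.
elim: t => [x|s g IH] //=; congr (op _ s); apply: functional_extensionality => j; exact: IH.
Qed.

Lemma Cg_congruence A (S : A -> A -> Prop) : congruence (Cg S).
Proof.
split=> [x _ R congR _|x y _ _ Hxy R congR HS|x y z _ _ _ Hxy Hyz R congR HS|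
         s f g _ _ Hfg R congR HS].
- exact: cong_refl.
- exact: cong_sym (Hxy R congR HS).
- exact: cong_trans (Hxy R congR HS) (Hyz R congR HS).
- by apply: cong_op => // i; apply: Hfg.
Qed.

Lemma Cg_base A (S : A -> A -> Prop) x y : S x y -> Cg S x y.
Proof. by move=> Sxy R _; apply. Qed.

Definition pcg A (b1 b2 : A) : A -> A -> Prop := Cg (fun x y => x = b1 /\ y = b2).

Lemma pcg_min A (b1 b2 a1 a2 : A) (R : A -> A -> Prop) :
  congruence R -> R b1 b2 -> pcg b1 b2 a1 a2 -> R a1 a2.
Proof. by move=> congR Rb; apply=> // x y [-> ->]. Qed.

Lemma pcg_pullback A B (R : B -> B -> Prop) (g : A -> B) (b1 b2 a1 a2 : A) :
  congruence R -> (forall s f, R (g (op A s f)) (op B s (fun i => g (f i)))) ->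
  R (g b1) (g b2) -> pcg b1 b2 a1 a2 -> R (g a1) (g a2).
Proof.
move=> congR gR; apply: (pcg_min (R := fun x y => R (g x) (g y))).
split=> [x _|x y _ _|x y z _ _ _|s f f' _ _ Hff'].
- exact: cong_refl.
- exact: cong_sym.
- exact: cong_trans.
- apply: cong_trans (gR s f) _ => //; apply: cong_trans (cong_sym congR (gR s f')) => //.
  exact: cong_op.
Qed.

Lemma pcg_hom A B (h : A -> B) (b1 b2 a1 a2 : A) :
  hom h -> pcg b1 b2 a1 a2 -> pcg (h b1) (h b2) (h a1) (h a2).
Proof.
move=> hh Ha R congR /(_ _ _ (conj erefl erefl)) Rb.
by apply: (pcg_pullback congR _ Rb Ha) => s f; rewrite hh; exact: cong_refl.
Qed.

End Algebras.

(** * Varieties and presented algebras *)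

Lemma union_witness J Y (Q : Y -> Prop) (P : J -> seq Y -> Prop) (js : seq J) :
  (forall j l l', P j l -> List.incl l l' -> P j l') ->
  (forall j, List.In j js -> exists2 l, (forall y, List.In y l -> Q y) & P j l) ->
  exists2 l, (forall y, List.In y l -> Q y) & (forall j, List.In j js -> P j l).
Proof.
move=> mono; elim: js => [|j js IH] H; first by exists [::].
have [l1 Ql1 Pl1] := H j (or_introl erefl).
have [l2 Ql2 Pl2] := IH (fun j' Hj' => H j' (or_intror Hj')).
exists (l1 ++ l2) => [y /List.in_app_iff [/Ql1|/Ql2] //|j' [<-|/Pl2 Pj']].
- exact: mono Pl1 (List.incl_appl _ (List.incl_refl _)).
- exact: mono Pj' (List.incl_appr _ (List.incl_refl _)).
Qed.

Section Variety.
Variables (L : language) (V : algebra L -> Prop).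
Hypothesis varV : is_variety V.
Implicit Types A B : algebra L.

Lemma V_quot A (R : A -> A -> Prop) : congruence R -> V A -> V (quot_alg R).
Proof.
move=> congR; case: varV => E HE /HE HA; apply/HE => p Ep e.
by rewrite !(eval_quot congR) HA.
Qed.

Lemma V_prod A B : V A -> V B -> V (prod_alg A B).
Proof. by case: varV => E HE /HE HA /HE HB; apply/HE => p Ep e; rewrite !eval_prod HA ?HB. Qed.

Lemma V_unit : V (unit_alg L).
Proof. by case: varV => E HE; apply/HE => p Ep e; case: (eval e p.1); case: (eval e p.2). Qed.

Lemma V_pi (I : Type) (A : I -> algebra L) : (forall i, V (A i)) -> V (pi_alg A).
Proof.
case: varV => E HE HA; apply/HE => p Ep e; apply: functional_extensionality_dep => i.
by rewrite !eval_pi; move: (HA i) => /HE; apply.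
Qed.

Definition V_entails X (pi : seq (term L X * term L X)) (p q : term L X) :=
  forall A, V A -> forall e : X -> A, holds e pi -> eval e p = eval e q.

Lemma V_entails_incl X (pi pi' : seq (term L X * term L X)) p q :
  List.incl pi pi' -> V_entails pi p q -> V_entails pi' p q.
Proof. by move=> S H A VA e /(holds_sub S); apply: H. Qed.

Definition V_entails_imp X (pi : seq (term L X * term L X)) (t1 t2 s1 s2 : term L X) :=
  forall A, V A -> forall e : X -> A, holds e pi -> eval e t1 = eval e t2 -> eval e s1 = eval e s2.

Lemma V_entails_imp_incl X (pi pi' : seq (term L X * term L X)) t1 t2 s1 s2 :
  List.incl pi pi' -> V_entails_imp pi t1 t2 s1 s2 -> V_entails_imp pi' t1 t2 s1 s2.
Proof. by move=> S H A VA e /(holds_sub S); apply: H. Qed.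

Section Presentation.
Variables (X : Type) (D : term L X * term L X -> Prop) (G : seq (term L X * term L X)).

Definition pres_rel (p q : term L X) :=
  exists2 pi, (forall d, List.In d pi -> D d) & V_entails (pi ++ G) p q.

Lemma pres_rel_mono p q pi pi' :
  V_entails (pi ++ G) p q -> List.incl pi pi' -> V_entails (pi' ++ G) p q.
Proof.
by move=> H S; apply: V_entails_incl H; apply: List.incl_app_app => //; exact: List.incl_refl.
Qed.

Lemma pres_congruence : congruence (A := term_alg L X) pres_rel.
Proof.
split=> [p _|p q _ _ [pi Dpi Hpq]|p q r _ _ _ [pi1 Dpi1 Hpq] [pi2 Dpi2 Hqr]|s f g _ _ Hfg].
- by exists [::].
- by exists pi => // A VA e He; rewrite (Hpq A VA e He).
- exists (pi1 ++ pi2) => [d /List.in_app_iff [/Dpi1|/Dpi2] //|A VA e He].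
  rewrite (pres_rel_mono Hpq (List.incl_appl _ (List.incl_refl _)) VA He).
  exact: (pres_rel_mono Hqr (List.incl_appr _ (List.incl_refl _)) VA He).
- have [pi Dpi Hpi] := @union_witness _ _ D (fun i pi => V_entails (pi ++ G) (f i) (g i))
    (enum 'I_(ar s)) (fun i => @pres_rel_mono (f i) (g i)) (fun i _ => Hfg i).
  exists pi => // A VA e He /=; congr (op A s); apply: functional_extensionality => i.
  exact: Hpi (In_enum_ord i) A VA e He.
Qed.

Definition pres_alg := quot_alg (A := term_alg L X) pres_rel.

Lemma V_pres_alg : V pres_alg.
Proof.
case: varV => E HE; apply/HE => p Ep e.
rewrite !(eval_quot pres_congruence); apply/(qclass_eq pres_congruence).
exists [::] => // A VA e' _; rewrite !eval_subst; by move: VA => /HE; apply.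
Qed.

End Presentation.
End Variety.

(** * Ultrafilters and ultraproducts *)

Definition ultrafilter (I : Type) (U : (I -> Prop) -> Prop) :=
  [/\ (forall X Y : I -> Prop, U X -> (forall i, X i -> Y i) -> U Y),
      (forall X Y : I -> Prop, U X -> U Y -> U (fun i => X i /\ Y i)),
      ~ U (fun _ => False) &
      (forall X : I -> Prop, U X \/ U (fun i => ~ X i))].

Lemma ultrafilter_seq_In (E : Type) :
  exists U : (seq E -> Prop) -> Prop, ultrafilter U /\ forall e, U (fun l => List.In e l).
Proof.
pose F := filter.filter_from (fun _ : seq E => True)
  (fun l l' => forall e, List.In e l -> List.In e l').
have properF : filter.ProperFilter F.
  apply: filter.filter_from_proper => [|l _]; last by exists l.
  apply: filter.filter_from_filter => [|l1 l2 _ _]; first by exists [::].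
  exists (l1 ++ l2) => // l' H.
  by split=> e He; apply: H; apply: List.in_or_app; [left|right].
have [G [ultraG FG]] := filter.ultraFilterLemma properF.
exists G; split; last by move=> e; apply: FG; exists [:: e] => // l'; apply; left.
split=> [X Y GX XY|X Y GX GY||X].
- exact: filter.filterS XY GX.
- exact: filter.filterI GX GY.
- by apply: (@filter.filter_not_empty _ G _);
    have -> : classical_sets.set0 = (fun _ : seq E => False).
- exact: filter.in_ultra_setVsetC X ultraG.
Qed.

Section Ultrafilter.
Variables (I : Type) (U : (I -> Prop) -> Prop).
Hypothesis ultraU : ultrafilter U.

Lemma ultra_mono (X Y : I -> Prop) : U X -> (forall i, X i -> Y i) -> U Y.
Proof. by case: (ultraU) => h _ _ _; exact: h. Qed.

Lemma ultra_and (X Y : I -> Prop) : U (fun i => X i /\ Y i) <-> U X /\ U Y.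
Proof.
case: (ultraU) => _ hI _ _; split=> [H|[]]; last exact: hI.
by split; apply: (ultra_mono H) => i [].
Qed.

Lemma ultra_not (X : I -> Prop) : U (fun i => ~ X i) <-> ~ U X.
Proof.
case: (ultraU) => _ _ h0 hem; split=> [HN HX|]; last by case: (hem X).
by apply: h0; apply: (ultra_mono (proj2 (ultra_and _ _) (conj HX HN))) => i [].
Qed.

Lemma ultra_all (X : I -> Prop) : (forall i, X i) -> U X.
Proof.
move=> HX; case: (ultraU) => _ _ h0 hem; case: (hem X) => // HN.
by exfalso; apply: h0; apply: (ultra_mono HN) => i /(_ (HX i)).
Qed.

Lemma ultra_or (X Y : I -> Prop) : U (fun i => X i \/ Y i) <-> U X \/ U Y.
Proof.
split=> [H|[] H]; last 2 first.
- by apply: (ultra_mono H) => i; left.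
- by apply: (ultra_mono H) => i; right.
apply: NNPP => /not_or_and [/ultra_not HX /ultra_not HY].
have := proj2 (ultra_and _ _) (conj H (proj2 (ultra_and _ _) (conj HX HY))).
by case: (ultraU) => _ _ h0 _ HF; apply: h0; apply: (ultra_mono HF) => i; tauto.
Qed.

Lemma ultra_imp (X Y : I -> Prop) : U (fun i => X i -> Y i) <-> (U X -> U Y).
Proof.
split=> [HXY HX|H].
  by apply: (ultra_mono (proj2 (ultra_and _ _) (conj HX HXY))) => i [Xi]; apply.
case: (classic (U X)) => [/H HY|/ultra_not HN].
  by apply: (ultra_mono HY) => i Yi _.
by apply: (ultra_mono HN) => i NXi /NXi.
Qed.

Lemma ultra_fin n (X : 'I_n -> I -> Prop) : (forall j, U (X j)) -> U (fun i => forall j, X j i).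
Proof.
move=> H; suff : U (fun i => forall j, List.In j (enum 'I_n) -> X j i).
  by move=> H'; apply: (ultra_mono H') => i Hi j; apply: Hi; exact: In_enum_ord.
elim: (enum 'I_n) => [|j s IH] /=; first exact: ultra_all.
by apply: (ultra_mono (proj2 (ultra_and _ _) (conj (H j) IH))) => i [Hj Hs] j' [<-|/Hs].
Qed.

Variables (A : I -> Type) (inhA : forall i, inhabited (A i)).

Lemma ultra_exists (P : forall i, A i -> Prop) :
  (exists f : forall i, A i, U (fun i => P i (f i))) <-> U (fun i => exists a, P i a).
Proof.
split=> [[f Hf]|H]; first by apply: (ultra_mono Hf) => i; exists (f i).
exists (fun i => epsilon (inhA i) (P i)); apply: (ultra_mono H) => i; exact: epsilon_spec.
Qed.

Lemma ultra_forall (P : forall i, A i -> Prop) :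
  (forall f : forall i, A i, U (fun i => P i (f i))) <-> U (fun i => forall a, P i a).
Proof.
split=> [H|H f]; last by apply: (ultra_mono H) => i; apply.
apply: NNPP => /ultra_not HN.
have [f Hf] : exists f : forall i, A i, U (fun i => ~ P i (f i)).
  by apply/(ultra_exists (fun i a => ~ P i a)); apply: (ultra_mono HN) => i /not_all_ex_not.
by move/ultra_not: Hf; apply.
Qed.

End Ultrafilter.

Section Ultraproduct.
Variables (I : Type) (U : (I -> Prop) -> Prop) (L : language) (A : I -> algebra L).
Hypothesis ultraU : ultrafilter U.

Definition ueq (f g : pi_alg A) := U (fun i => f i = g i).

Lemma ueq_congruence : congruence ueq.
Proof.
split=> [f _|f g _ _|f g h _ _ _ Hfg Hgh|s f g _ _ Hfg].
- exact: ultra_all.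
- by move=> H; apply: (ultra_mono ultraU H) => i ->.
- by apply: (ultra_mono ultraU (proj2 (ultra_and ultraU _ _) (conj Hfg Hgh))) => // i [-> ->].
- apply: (ultra_mono ultraU (ultra_fin ultraU Hfg)) => i Hi /=; congr (op _ s).
  exact: functional_extensionality.
Qed.

Definition ultra_alg := quot_alg ueq.

Lemma uclass_eq (f g : pi_alg A) : qclass ueq f = qclass ueq g <-> U (fun i => f i = g i).
Proof. exact: (qclass_eq ueq_congruence). Qed.

Lemma eval_ultra X (e : X -> pi_alg A) t :
  eval (A := ultra_alg) (fun x => qclass ueq (e x)) t =
  qclass ueq (fun i => eval (fun x => e x i) t).
Proof.
rewrite (eval_qclass ueq_congruence); congr qclass.
by apply: functional_extensionality_dep => i; exact: eval_pi.
Qed.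

Lemma holds_ultra X (e : X -> pi_alg A) pi :
  holds (A := ultra_alg) (fun x => qclass ueq (e x)) pi <-> U (fun i => holds (fun x => e x i) pi).
Proof.
elim: pi => [|p pi IH] /=; first by split=> // _; exact: ultra_all.
by rewrite (ultra_and ultraU) -IH !eval_ultra uclass_eq.
Qed.

Lemma upd_qclass (e : nat -> pi_alg A) n (f : pi_alg A) :
  upd (fun m => qclass ueq (e m)) n (qclass ueq f) = (fun m => qclass ueq (upd e n f m)).
Proof. by apply: functional_extensionality => m; rewrite /upd; case: (m == n). Qed.

Lemma upd_pi (e : nat -> pi_alg A) n (f : pi_alg A) i :
  (fun m => upd e n f m i) = upd (fun m => e m i) n (f i).
Proof. by apply: functional_extensionality => m; rewrite /upd; case: (m == n). Qed.

Theorem los (inhA : forall i, inhabited (A i)) (p : fm L void) (e : nat -> pi_alg A) :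
  sat (vd ultra_alg) (fun n => qclass ueq (e n)) p <->
  U (fun i => sat (vd (A i)) (fun n => e n i) p).
Proof.
elim: p e => [t1 t2||q IH|q IHq r IHr|q IHq r IHr|q IHq r IHr|n q IH|n q IH] e /=.
- have envE t : eval (A := ultra_alg) (env (fun n => qclass ueq (e n)) (vd ultra_alg)) t =
                qclass ueq (fun i => eval (env (fun n => e n i) (vd (A i))) t).
    by rewrite -eval_ultra; congr eval; apply: functional_extensionality => -[].
  by rewrite !envE uclass_eq.
- by split=> //; case: (ultraU).
- by rewrite IH (ultra_not ultraU).
- by rewrite IHq IHr (ultra_and ultraU).
- by rewrite IHq IHr (ultra_or ultraU).
- by rewrite IHq IHr (ultra_imp ultraU).
- rewrite -(ultra_forall ultraU inhA (fun i a => sat _ (upd _ n a) q)).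
  split=> [H f|H c].
    move: (H (qclass ueq f)); rewrite upd_qclass IH => Hf.
    by apply: (ultra_mono ultraU Hf) => i; rewrite upd_pi.
  have [f ->] := qclass_surj c; rewrite upd_qclass IH.
  by apply: (ultra_mono ultraU (H f)) => i; rewrite upd_pi.
- rewrite -(ultra_exists ultraU inhA (fun i a => sat _ (upd _ n a) q)).
  split=> [[c]|[f Hf]].
    have [f ->] := qclass_surj c; rewrite upd_qclass IH => Hf.
    by exists f; apply: (ultra_mono ultraU Hf) => i; rewrite upd_pi.
  exists (qclass ueq f); rewrite upd_qclass IH.
  by apply: (ultra_mono ultraU Hf) => i; rewrite upd_pi.
Qed.

End Ultraproduct.
Arguments ueq {I} U {L} A f g.

Lemma ultra_emb I (U : (I -> Prop) -> Prop) L (A B : I -> algebra L) (h : forall i, A i -> B i) :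
  ultrafilter U -> (forall i, hom (h i)) -> (forall i, injective (h i)) ->
  exists j : ultra_alg U A -> ultra_alg U B, [/\ hom j, injective j &
    forall f, j (qclass (ueq U A) f) = qclass (ueq U B) (fun i => h i (f i))].
Proof.
move=> ultraU hh ih.
pose j (c : ultra_alg U A) : ultra_alg U B := qclass (ueq U B) (fun i => h i (qrepr c i)).
have jE f : j (qclass (ueq U A) f) = qclass (ueq U B) (fun i => h i (f i)).
  apply/(uclass_eq ultraU); apply: (ultra_mono ultraU (qreprR (ueq_congruence A ultraU) f)) => // i.
  by move=> ->.
exists j; split=> // [s F|c c'].
- have -> : op (ultra_alg U A) s F =
             qclass (ueq U A) (op (pi_alg A) s (fun m => qrepr (F m))) by [].
  rewrite jE -(qclass_hom (ueq_congruence B ultraU)); congr qclass.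
  by apply: functional_extensionality_dep => i; rewrite /= hh.
- have [f ->] := qclass_surj c; have [f' ->] := qclass_surj c'.
  rewrite !jE => /(uclass_eq ultraU) H; apply/(uclass_eq ultraU).
  by apply: (ultra_mono ultraU H) => i /ih.
Qed.

(** * Principal congruences under CEP and congruence distributivity *)

Section CongruenceExtension.
Variables (L : language) (V : algebra L -> Prop).
Hypothesis cepV : CEP V.
Implicit Types A B Z : algebra L.

Lemma image_congruence_on A B (h : A -> B) (R : A -> A -> Prop) :
  hom h -> injective h -> congruence R ->
  congruence_on (fun u => exists x, h x = u)
    (fun u v => exists x y, [/\ h x = u, h y = v & R x y]).
Proof.
move=> hh ih congR; split=> [u [x <-]|u v _ _ [x [y [<- <- Rxy]]]|u v w _ _ _|s f g _ _].
- by exists x, x; split=> //; exact: cong_refl.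
- by exists y, x; split=> //; exact: cong_sym.
- move=> [x [y [<- <- Rxy]]] [y' [z [Ey <- Ryz]]]; rewrite (ih _ _ Ey) in Ryz.
  by exists x, z; split=> //; exact: cong_trans Rxy Ryz.
- move=> Hfg; have /choice [xy Hxy] :
      forall i, exists xy : A * A, [/\ h xy.1 = f i, h xy.2 = g i & R xy.1 xy.2].
    by move=> i; have [x [y Hxy]] := Hfg i; exists (x, y).
  exists (op A s (fun i => (xy i).1)), (op A s (fun i => (xy i).2)); rewrite !hh; split.
  + by congr (op B s); apply: functional_extensionality => i; case: (Hxy i).
  + by congr (op B s); apply: functional_extensionality => i; case: (Hxy i).
  + by apply: cong_op => // i; case: (Hxy i).
Qed.

Lemma pcg_emb A B (h : A -> B) (b1 b2 a1 a2 : A) :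
  V B -> hom h -> injective h -> pcg (h b1) (h b2) (h a1) (h a2) -> pcg b1 b2 a1 a2.
Proof.
move=> VB hh ih Hpcg R congR /(_ _ _ (conj erefl erefl)) Rb.
have [Th [congTh ThE]] := cepV VB (image_subuniverse hh) (image_congruence_on hh ih congR).
have Thb : Th (h b1) (h b2) by apply/ThE; [exists b1|exists b2|exists b1, b2].
have /ThE [] := pcg_min congTh Thb Hpcg; [by exists a1|by exists a2|].
by move=> x [y [/ih <- /ih <-]].
Qed.

Lemma factor_hom A Z X (gA : X -> A) (gZ : X -> Z) :
  (forall t t' : term L X, eval gZ t = eval gZ t' -> eval gA t = eval gA t') ->
  exists f : gen_alg gZ -> A, hom f /\ forall x, f (gen gZ x) = gA x.
Proof.
move=> wd; pose f (u : gen_alg gZ) :=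
  eval gA (proj1_sig (constructive_indefinite_description _ (proj2_sig u))).
have fE u t : eval gZ t = proj1_sig u -> f u = eval gA t.
  rewrite /f; case: (constructive_indefinite_description _ _) => t' /= Et' Et.
  by apply: wd; rewrite Et Et'.
exists f; split=> [s F|x]; last exact: (fE _ (Var x)).
have /choice [tF EtF] : forall i, exists t, eval gZ t = proj1_sig (F i) := fun i => proj2_sig (F i).
rewrite (fE _ (App s tF)) /=; last by congr (op Z s); apply: functional_extensionality.
by congr (op A s); apply: functional_extensionality => i; rewrite (fE _ _ (EtF i)).
Qed.

Lemma pcg_transfer A Z (a1 a2 b1 b2 : A) (c1 c2 d1 d2 : Z) :
  V Z -> pcg d1 d2 c1 c2 ->
  (forall t t', eval (asg4 c1 c2 d1 d2) t = eval (asg4 c1 c2 d1 d2) t' ->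
                eval (asg4 a1 a2 b1 b2) t = eval (asg4 a1 a2 b1 b2) t') ->
  pcg b1 b2 a1 a2.
Proof.
move=> VZ Hc wd; have [f [hf fE]] := factor_hom wd.
have Hgen : pcg (gen _ vy1) (gen _ vy2) (gen _ vx1) (gen (asg4 c1 c2 d1 d2) vx2).
  by apply: (pcg_emb VZ (@sub_val_hom _ _ _ _) (@sub_val_inj _ _ _ _)).
by have := pcg_hom hf Hgen; rewrite !fE.
Qed.

End CongruenceExtension.

Section CongruenceDistributivity.
Variables (L : language) (V : algebra L -> Prop).
Hypothesis varV : is_variety V.
Hypothesis cdV : congruence_distributive V.
Implicit Types A B P : algebra L.

Lemma cd_meet_factor P (th e1 e2 : P -> P -> Prop) :
  V P -> congruence th -> congruence e1 -> congruence e2 ->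
  (forall u v, e1 u v -> e2 u v -> u = v) ->
  forall u v, e2 u v -> Cg (fun x y => th x y \/ e1 x y) u v -> th u v.
Proof.
move=> VP cth ce1 ce2 e12 u v e2uv Juv.
apply: (proj1 (cdV VP ce2 cth ce1 u v) (conj e2uv Juv)) => // x y [[_ //]|[e2xy e1xy]].
by rewrite (e12 x y e1xy e2xy); exact: cong_refl.
Qed.

Lemma pcg_factor P (th e1 e2 : P -> P -> Prop) A (g : A -> P) (b1 b2 a1 a2 : A) :
  V P -> congruence th -> congruence e1 -> congruence e2 ->
  (forall u v, e1 u v -> e2 u v -> u = v) ->
  (forall s f, e1 (g (op A s f)) (op P s (fun i => g (f i)))) -> (forall x y, e2 (g x) (g y)) ->
  Cg (fun u v => th u v \/ e1 u v) (g b1) (g b2) -> pcg b1 b2 a1 a2 -> th (g a1) (g a2).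
Proof.
move=> VP cth ce1 ce2 e12 ge1 ge2 Hb Ha.
apply: (cd_meet_factor VP cth ce1 ce2 e12 (ge2 _ _)).
by apply: (pcg_pullback (Cg_congruence _) _ Hb Ha) => s f; apply: Cg_base; right; exact: ge1.
Qed.

(* Move one coordinate at a time: by congruence distributivity, the kernel of the
   other projection keeps each move inside Cg((b1, b1'), (b2, b2')). *)
Lemma pcg_prod A B (b1 b2 a1 a2 : A) (b1' b2' a1' a2' : B) :
  V A -> V B -> pcg b1 b2 a1 a2 -> pcg b1' b2' a1' a2' ->
  pcg (A := prod_alg A B) (b1, b1') (b2, b2') (a1, a1') (a2, a2').
Proof.
move=> VA VB Ha Ha'; have VP := V_prod varV VA VB.
set th := pcg _ _; have cth : congruence th := Cg_congruence _.
have ker1 : congruence (fun u v : prod_alg A B => u.1 = v.1) := congruence_ker (fun _ _ => erefl).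
have ker2 : congruence (fun u v : prod_alg A B => u.2 = v.2) := congruence_ker (fun _ _ => erefl).
have ker12 (u v : prod_alg A B) : u.1 = v.1 -> u.2 = v.2 -> u = v.
  by case: u v => ? ? [? ?] /= -> ->.
have thb (e : prod_alg A B -> prod_alg A B -> Prop) u v :
    e u (b1, b1') -> e (b2, b2') v -> Cg (fun x y => th x y \/ e x y) u v.
  move=> eu ev; apply: cong_trans (Cg_base (or_intror eu)) _; first exact: Cg_congruence.
  apply: cong_trans (Cg_base (or_intror ev)); first exact: Cg_congruence.
  by apply: Cg_base; left; apply: Cg_base.
have th_fst : th (a1, a1') (a2, a1').
  apply: (pcg_factor (g := fun x : A => (x, a1') : prod_alg A B) VP cth ker1 ker2 ker12
           _ _ _ Ha) => //.
  exact: (thb (fun u v => u.1 = v.1)).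
have th_snd : th (a2, a1') (a2, a2').
  apply: (pcg_factor (g := fun y : B => (a2, y) : prod_alg A B) VP cth ker2 ker1
           _ _ _ _ Ha') => //.
  - by move=> u v e2 e1; apply: ker12.
  - exact: (thb (fun u v => u.2 = v.2)).
exact: (cong_trans cth th_fst th_snd).
Qed.

End CongruenceDistributivity.

(** * The guarded deduction theorem *)

Section GuardedDeduction.
Variables (L : language) (V : algebra L -> Prop).
Hypothesis varV : is_variety V.
Hypothesis cepV : CEP V.
Variables (k : nat) (gamma phi : seq (term L ('I_4 + 'I_k) * term L ('I_4 + 'I_k))).
Implicit Types A B C : algebra L.

Definition zasg (T : Type) (a1 a2 b1 b2 : T) (z : 'I_k -> T) := join_asg (asg4 a1 a2 b1 b2) z.

Definition gdt_holds A (a1 a2 b1 b2 : A) :=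
  forall z, holds (zasg a1 a2 b1 b2 z) gamma -> holds (zasg a1 a2 b1 b2 z) phi.

Definition gdt_counterexample A (a1 a2 b1 b2 : A) (z : 'I_k -> A) :=
  holds (zasg a1 a2 b1 b2 z) gamma /\ ~ holds (zasg a1 a2 b1 b2 z) phi.

Lemma zasg_map (T T' : Type) (f : T -> T') a1 a2 b1 b2 z :
  (fun v => f (zasg a1 a2 b1 b2 z v)) = zasg (f a1) (f a2) (f b1) (f b2) (fun j => f (z j)).
Proof. by apply: functional_extensionality => -[i|j] //=; exact: asg4_map. Qed.

Lemma gdt_counterexample_emb A B (h : A -> B) a1 a2 b1 b2 z :
  hom h -> injective h -> gdt_counterexample a1 a2 b1 b2 z ->
  gdt_counterexample (h a1) (h a2) (h b1) (h b2) (fun j => h (z j)).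
Proof.
move=> hh ih [Hg Hp]; rewrite /gdt_counterexample -zasg_map.
by split=> [|/(holds_emb hh ih)]; [exact: holds_hom|].
Qed.

(* The directions of the guarded deduction theorem that are used: (i) both
   ways and (ii) from left to right. *)
Hypothesis gdt_intro : forall n (s1 s2 t1 t2 : term L 'I_n) pi,
  V_entails_imp V pi t1 t2 s1 s2 ->
  forall A, V A -> forall e : 'I_n -> A, holds e pi ->
    gdt_holds (eval e s1) (eval e s2) (eval e t1) (eval e t2).
Hypothesis gdt_elim : forall n (s1 s2 t1 t2 : term L 'I_n) pi,
  (forall A, V A -> forall e : 'I_n -> A, holds e pi ->
     gdt_holds (eval e s1) (eval e s2) (eval e t1) (eval e t2)) ->
  V_entails_imp V pi t1 t2 s1 s2.
Hypothesis gdt_conservative : forall n (s1 s2 t1 t2 : term L 'I_n) pi (p q : term L 'I_n),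
  (forall A, V A -> forall (e : 'I_n -> A) (z : 'I_k -> A), holds e pi ->
     holds (zasg (eval e s1) (eval e s2) (eval e t1) (eval e t2) z) gamma -> eval e p = eval e q) ->
  V_entails V pi p q.

Definition gdt_rel A (g : 'I_4 -> A) (x y : A) := exists p q pi,
  [/\ eval g p = x, eval g q = y, holds g pi & V_entails_imp V pi (Var vy1) (Var vy2) p q].

Lemma gdt_rel_congruence_on A (g : 'I_4 -> A) :
  congruence_on (fun x => exists t, eval g t = x) (gdt_rel g).
Proof.
split=> [x [t <-]|x y _ _|x y z _ _ _|s f f' _ _ Hff'].
- by exists t, t, [::]; split=> // B _ e _.
- move=> [p [q [pi [Ep Eq' Hpi Hent]]]]; exists q, p, pi; split=> // B VB e He E.
  by rewrite (Hent B VB e He E).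
- move=> [p [q [pi [Ep Eq' Hpi Hent]]]] [q' [r [pi' [Eq'' Er Hpi' Hent']]]].
  exists p, r, ((q, q') :: pi ++ pi'); split=> //.
    by split; [rewrite Eq' Eq''|exact/holds_cat].
  move=> B VB e [Eqq' /holds_cat [He He']] E.
  by rewrite (Hent B VB e He E) Eqq'; exact: Hent'.
- have [pi Hpi Hent] : exists2 pi, (forall d, List.In d pi -> eval g d.1 = eval g d.2) &
      forall i, List.In i (enum 'I_(ar s)) -> exists p q,
        [/\ eval g p = f i, eval g q = f' i & V_entails_imp V pi (Var vy1) (Var vy2) p q].
    apply: union_witness => [i l l' [p [q [Ep Eq' H]]] S|i _].
      by exists p, q; split=> //; exact: V_entails_imp_incl S H.
    have [p [q [pi [Ep Eq' Hpi H]]]] := Hff' i.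
    by exists pi; [exact/holdsP|exists p, q].
  have /choice [p Hp] := fun i => Hent i (In_enum_ord i).
  have /choice [q Hq] := Hp.
  exists (App s p), (App s q), pi; split; last 2 first.
  + exact/holdsP.
  + move=> B VB e He E /=; congr (op B s); apply: functional_extensionality => i.
    by case: (Hq i) => _ _; apply.
  + by congr (op A s); apply: functional_extensionality => i; case: (Hq i).
  + by congr (op A s); apply: functional_extensionality => i; case: (Hq i).
Qed.

(* CEP extends gdt_rel, a congruence of the subalgebra generated by a1, a2, b1, b2
   containing (b1, b2), to A; hence (a1, a2) is in it and (i) applies. *)
Lemma pcg_gdt A (a1 a2 b1 b2 : A) : V A -> pcg b1 b2 a1 a2 -> gdt_holds a1 a2 b1 b2.
Proof.
move=> VA Hpcg; pose g := asg4 a1 a2 b1 b2.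
have [Th [congTh ThE]] :=
  cepV VA (image_subuniverse (eval_term_hom g)) (gdt_rel_congruence_on g).
have gen_in i : exists t, eval g t = g i by exists (Var i).
have Thb : Th b1 b2.
  apply: (proj1 (ThE _ _ (gen_in vy1) (gen_in vy2))).
  by exists (Var vy1), (Var vy2), [::]; split=> // B _ e _; apply.
have := proj2 (ThE _ _ (gen_in vx1) (gen_in vx2)) (pcg_min congTh Thb Hpcg).
move=> [p [q [pi [Ep Eq' Hpi Hent]]]].
by have := gdt_intro Hent VA Hpi; rewrite Ep Eq'.
Qed.

(* The V-algebra presented by the diagram of A and gamma(a1, a2, b1, b2, z) for
   new constants z.  By (ii), A embeds into it; by (i), phi fails at z unless
   (a1, a2) is in Cg(b1, b2). *)
Section DiagramExtension.
Variables (A : algebra L) (a1 a2 b1 b2 : A).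
Hypothesis VA : V A.

Definition op_eq (d : term L (A + 'I_k) * term L (A + 'I_k)) :=
  exists s (f : 'I_(ar s) -> A), d = (Var (inl (op A s f)), App s (fun j => Var (inl (f j)))).

(* The junk value a1 on the constants z is harmless: they do not occur in op_eq. *)
Definition elem_of (v : A + 'I_k) : A := if v is inl x then x else a1.

Lemma op_eq_holds d : op_eq d -> eval elem_of d.1 = eval elem_of d.2.
Proof. by case=> s [f ->]. Qed.

Lemma op_eq_eval B (e e' : A + 'I_k -> B) d :
  op_eq d -> (forall x, e (inl x) = e' (inl x)) ->
  eval e d.1 = eval e' d.1 /\ eval e d.2 = eval e' d.2.
Proof.
case=> s [f ->] He /=; split; first exact: He.
by congr (op B s); apply: functional_extensionality => j.
Qed.

Definition ext_subst : 'I_4 + 'I_k -> A + 'I_k := zasg (inl a1) (inl a2) (inl b1) (inl b2) inr.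
Definition ext_rel := pres_rel V op_eq (map_eqs ext_subst gamma).
Definition ext_alg := pres_alg V op_eq (map_eqs ext_subst gamma).
Definition ext_emb (x : A) : ext_alg := qclass (A := term_alg L _) ext_rel (Var (inl x)).
Definition ext_z (j : 'I_k) : ext_alg := qclass (A := term_alg L _) ext_rel (Var (inr j)).

Let congE : congruence (A := term_alg L _) ext_rel := pres_congruence _ _ _.

Lemma eval_ext t :
  eval (A := ext_alg) (zasg (ext_emb a1) (ext_emb a2) (ext_emb b1) (ext_emb b2) ext_z) t =
  qclass (A := term_alg L _) ext_rel (tmap ext_subst t).
Proof.
rewrite -(zasg_map (fun v => qclass (A := term_alg L _) ext_rel (Var v) : ext_alg)).
by rewrite (eval_qclass congE) eval_term_alg_var.
Qed.

Lemma ext_emb_hom : hom ext_emb.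
Proof.
move=> s f; apply/(qclass_eq congE).
apply: (cong_trans congE (y := App s (fun i => Var (inl (f i))))).
  exists [:: (Var (inl (op A s f)), App s (fun j => Var (inl (f j))))] => [d [<-|[]]|B VB e [] //].
  by exists s, f.
by apply: (cong_op congE) => i; apply: (cong_sym congE); exact: qreprR.
Qed.

Lemma ext_gamma : holds (zasg (ext_emb a1) (ext_emb a2) (ext_emb b1) (ext_emb b2) ext_z) gamma.
Proof.
apply/holdsP => d Hd; rewrite !eval_ext; apply/(qclass_eq congE); exists [::] => // B VB e.
move/holdsP => He; apply: (He (_, _)).
exact: (List.in_map (fun p => (tmap ext_subst p.1, tmap ext_subst p.2))).
Qed.

(* The guarded deduction theorem speaks of terms over some 'I_n, so the finitely
   many elements of A involved are renamed. *)
Lemma diagram_translate (pA : seq (term L (A + 'I_k) * term L (A + 'I_k))) (extra : seq A) :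
  (forall d, List.In d pA -> op_eq d) ->
  exists n (idx : A -> 'I_n) (w : 'I_n -> A) (pi : seq (term L 'I_n * term L 'I_n)),
  [/\ forall x, List.In x (a1 :: a2 :: b1 :: b2 :: extra) -> w (idx x) = x,
      forall B (q : A -> B), hom q -> holds (fun i => q (w i)) pi &
      forall B (e : 'I_n -> B) z, holds e pi ->
        holds (zasg (e (idx a1)) (e (idx a2)) (e (idx b1)) (e (idx b2)) z) gamma ->
        holds (join_asg (fun x => e (idx x)) z) (pA ++ map_eqs ext_subst gamma)].
Proof.
move=> HpA; pose vars := List.flat_map (fun d => tvars d.1 ++ tvars d.2) pA.
pose l0 := a1 :: a2 :: b1 :: b2 :: extra.
have [n [idx [w Hw]]] := finite_reindex a1 (l0 ++ map elem_of vars).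
exists n, idx, w, (map_eqs (fun v => idx (elem_of v)) pA); split.
- by move=> x Hx; apply: Hw; apply/In_cat; left.
- move=> B q hq; apply/holds_map_eqs; apply: (holds_hom hq); apply/holdsP => d Hd.
  have wE t : (forall v, List.In v (tvars t) -> List.In v (tvars d.1 ++ tvars d.2)) ->
      eval (fun v => w (idx (elem_of v))) t = eval elem_of t.
    move=> St; apply: eq_eval => v Hv; apply: Hw.
    have Hin : List.In v vars.
      by apply/List.in_flat_map; exists d; split=> //; exact: St (occurs_tvars Hv).
    by apply/In_cat; right; apply: List.in_map.
  rewrite !wE => [|v Hv|v Hv]; first exact: op_eq_holds (HpA d Hd).
  - by apply/In_cat; right.
  - by apply/In_cat; left.
- move=> B e z /holds_map_eqs /holdsP He Hg; apply/holds_cat; split.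
  + apply/holdsP => d Hd.
    have [-> ->] := op_eq_eval (e := join_asg (fun x => e (idx x)) z)
                      (e' := fun v => e (idx (elem_of v))) (HpA d Hd) (fun _ => erefl).
    exact: He.
  + by apply/holds_map_eqs; rewrite zasg_map.
Qed.

Lemma ext_emb_inj : injective ext_emb.
Proof.
move=> x y /(qclass_eq congE) [pA HpA Hent].
have [n [idx [w [pi [Hw Hpi Hext]]]]] := diagram_translate [:: x; y] HpA.
have Hxy : V_entails V pi (Var (idx x)) (Var (idx y)).
  apply: (gdt_conservative (s1 := Var (idx a1)) (s2 := Var (idx a2)) (t1 := Var (idx b1))
                           (t2 := Var (idx b2))) => B VB e z He Hg.
  exact: Hent B VB _ (Hext B e z He Hg).
have := Hxy A VA w (Hpi A id (fun _ _ => erefl)).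
by rewrite /= !Hw //=; tauto.
Qed.

Lemma ext_phi_fails :
  ~ pcg b1 b2 a1 a2 -> ~ holds (zasg (ext_emb a1) (ext_emb a2) (ext_emb b1) (ext_emb b2) ext_z) phi.
Proof.
move=> Hnpcg /holdsP Hphi; apply: Hnpcg.
have [pA HpA Hent] : exists2 pA, (forall d, List.In d pA -> op_eq d) &
    forall d, List.In d phi ->
      V_entails V (pA ++ map_eqs ext_subst gamma) (tmap ext_subst d.1) (tmap ext_subst d.2).
  apply: union_witness => [d l l' H S|d Hd]; first exact: pres_rel_mono H S.
  by apply/(qclass_eq congE); rewrite -!eval_ext; apply: Hphi.
have [n [idx [w [pi [Hw Hpi Hext]]]]] := diagram_translate [::] HpA.
have Himp : V_entails_imp V pi (Var (idx b1)) (Var (idx b2)) (Var (idx a1)) (Var (idx a2)).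
  apply: gdt_elim => B VB e He z Hg; apply/holdsP => d Hd.
  have := Hent d Hd B VB _ (Hext B e z He Hg).
  by rewrite !eval_tmap zasg_map.
move=> R congR /(_ _ _ (conj erefl erefl)) Rb.
have := Himp _ (V_quot varV congR VA) (fun i => qclass R (w i)) (Hpi _ _ (qclass_hom congR)).
rewrite /= !Hw /=; try tauto.
by move=> H; apply/(qclass_eq congR); apply: H; apply/(qclass_eq congR).
Qed.

End DiagramExtension.

Lemma gdt_counterexample_ext A (a1 a2 b1 b2 : A) : V A -> ~ pcg b1 b2 a1 a2 ->
  exists C (h : A -> C) z,
    [/\ V C, hom h, injective h & gdt_counterexample (h a1) (h a2) (h b1) (h b2) z].
Proof.
move=> VA Hnpcg; exists (ext_alg a1 a2 b1 b2), (ext_emb a1 a2 b1 b2), (ext_z a1 a2 b1 b2); split.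
- exact: V_pres_alg.
- exact: ext_emb_hom.
- exact: ext_emb_inj.
- by split; [exact: ext_gamma|exact: ext_phi_fails].
Qed.

End GuardedDeduction.

Section UltraproductGDT.
Variables (L : language) (k : nat) (gamma phi : seq (term L ('I_4 + 'I_k) * term L ('I_4 + 'I_k))).
Variables (I : Type) (U : (I -> Prop) -> Prop) (A : I -> algebra L).
Hypothesis ultraU : ultrafilter U.

Lemma holds_zasg_ultra (a1 a2 b1 b2 : pi_alg A) (z : 'I_k -> pi_alg A) pi :
  holds (A := ultra_alg U A)
    (zasg (qclass _ a1) (qclass _ a2) (qclass _ b1) (qclass _ b2) (fun j => qclass _ (z j))) pi <->
  U (fun i => holds (zasg (a1 i) (a2 i) (b1 i) (b2 i) (fun j => z j i)) pi).
Proof.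
rewrite -(zasg_map (qclass (ueq U A))) (holds_ultra ultraU).
suff -> : (fun i => holds (fun x => zasg a1 a2 b1 b2 z x i) pi) =
          (fun i => holds (zasg (a1 i) (a2 i) (b1 i) (b2 i) (fun j => z j i)) pi) by [].
by apply: functional_extensionality => i; rewrite (zasg_map (fun f : pi_alg A => f i)).
Qed.

Lemma gdt_holds_ultra (a1 a2 b1 b2 : pi_alg A) :
  (forall i, gdt_holds gamma phi (a1 i) (a2 i) (b1 i) (b2 i)) ->
  gdt_holds (A := ultra_alg U A) gamma phi (qclass _ a1) (qclass _ a2) (qclass _ b1) (qclass _ b2).
Proof.
move=> Hgdt z; have -> : z = fun j => qclass (ueq U A) (qrepr (z j)).
  by apply: functional_extensionality => j; rewrite qreprK.
rewrite !holds_zasg_ultra -(ultra_imp ultraU); apply: (ultra_all ultraU) => i; exact: Hgdt.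
Qed.

Lemma gdt_counterexample_ultra (a1 a2 b1 b2 : pi_alg A) (z : 'I_k -> pi_alg A) :
  (forall i, gdt_counterexample gamma phi (a1 i) (a2 i) (b1 i) (b2 i) (fun j => z j i)) ->
  gdt_counterexample (A := ultra_alg U A) gamma phi
    (qclass _ a1) (qclass _ a2) (qclass _ b1) (qclass _ b2) (fun j => qclass _ (z j)).
Proof.
move=> Hcex; rewrite /gdt_counterexample !holds_zasg_ultra -(ultra_not ultraU).
by split; apply: (ultra_all ultraU) => i; case: (Hcex i).
Qed.

End UltraproductGDT.

(** * First-order formulas and the model completion *)

Section FirstOrder.
Variable L : language.
Implicit Types A B : algebra L.

Lemma sat_fm_map (C D : Type) (f : C -> D) B (c : D -> B) (q : fm L C) e :
  sat c e (fm_map f q) <-> sat (fun x => c (f x)) e q.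
Proof.
elim: q e => [t1 t2||q IH|q IHq r IHr|q IHq r IHr|q IHq r IHr|n q IH|n q IH] e /=.
- have envE t : eval (env e c) (tmap (sum_mapr f) t) = eval (env e (fun x => c (f x))) t.
    by rewrite eval_tmap; congr eval; apply: functional_extensionality => -[].
  by rewrite !envE.
- by [].
- by rewrite IH.
- by rewrite IHq IHr.
- by rewrite IHq IHr.
- by rewrite IHq IHr.
- by split=> H a; apply/IH; apply: H.
- by split=> [[a /IH H]|[a /IH H]]; exists a.
Qed.

Lemma sat_diagram_eq (C : Type) B (c : C -> B) e (t1 t2 : term L C) :
  sat c e (FEq (tmap inr t1) (tmap inr t2)) <-> eval c t1 = eval c t2.
Proof. by rewrite /= !eval_tmap. Qed.

Definition all_close (vs : seq nat) (q : fm L void) := foldr (fun n p => FAll n p) q vs.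

Lemma free_in_all_close vs q n : free_in n (all_close vs q) -> ~ List.In n vs /\ free_in n q.
Proof.
elim: vs => [|m vs IH] /=; first by split.
by move=> [Hnm /IH [Hvs Hq]]; split=> // -[Emn|//]; apply: Hnm.
Qed.

Lemma universal_all_close vs q : universal q -> universal (all_close vs q).
Proof. by elim: vs => [|m vs IH] //= Hq; apply: univ_all; exact: IH. Qed.

Lemma sat_all_close B vs q (e : nat -> B) :
  (forall e', sat (vd B) e' q) -> sat (vd B) e (all_close vs q).
Proof. by elim: vs e => [|m vs IH] e Hq /=; [exact: Hq|move=> a; exact: IH]. Qed.

Lemma all_close_sat B vs q (e : nat -> B) : sat (vd B) e (all_close vs q) -> sat (vd B) e q.
Proof.
elim: vs e => [|m vs IH] e //= H; apply: IH; have := H (e m).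
by congr sat; apply: functional_extensionality => n; rewrite /upd; case: eqP => [->|].
Qed.

Definition ex_close (vs : seq nat) (q : fm L void) := foldr (fun n p => FEx n p) q vs.

Lemma sat_ex_close B (c : void -> B) vs q (e : nat -> B) :
  sat c e (ex_close vs q) <-> exists2 e', (forall n, ~ List.In n vs -> e' n = e n) & sat c e' q.
Proof.
elim: vs e => [|m vs IH] e /=.
  split=> [Hq|[e' He' Hq]]; first by exists e.
  by have -> : e = e' by apply: functional_extensionality => n; rewrite He'.
split=> [[a /IH [e' He' Hq]]|[e' He' Hq]].
  exists e' => // n Hn; rewrite He'; last by move=> Hnvs; apply: Hn; right.
  by rewrite /upd; case: eqP => // Enm; case: Hn; left.
exists (e' m); apply/IH; exists e' => // n Hn.
by rewrite /upd; case: eqP => [->|Hnm] //; apply: He' => -[Emn|//]; case: Hnm.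
Qed.

Definition fm_eqs (X : Type) (tau : X -> nat) (pi : seq (term L X * term L X)) : fm L void :=
  let var x : nat + void := inl (tau x) in
  foldr (fun d acc => FAnd (FEq (tmap var d.1) (tmap var d.2)) acc) (FNeg FBot) pi.

Lemma sat_fm_eqs B (c : void -> B) e X (tau : X -> nat) pi :
  sat c e (fm_eqs tau pi) <-> holds (fun x => e (tau x)) pi.
Proof. by elim: pi => [|d pi IH] /=; [split=> // _ []|rewrite !eval_tmap IH]. Qed.

End FirstOrder.

Lemma inhabited_alg (L : language) (A : algebra L) : (exists s : sym L, ar s = 0) -> inhabited A.
Proof. by case=> s Hs; constructor; apply: (op A s) => -[i]; rewrite Hs. Qed.

Section ModelCompletion.
Variables (L : language) (V : algebra L -> Prop).
Hypothesis const : exists s : sym L, ar s = 0.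
Hypothesis varV : is_variety V.
Hypothesis cepV : CEP V.
Variables (k : nat) (gamma phi : seq (term L ('I_4 + 'I_k) * term L ('I_4 + 'I_k))).
Hypothesis gdt_intro : forall n (s1 s2 t1 t2 : term L 'I_n) pi,
  V_entails_imp V pi t1 t2 s1 s2 ->
  forall A, V A -> forall e : 'I_n -> A, holds e pi ->
    gdt_holds gamma phi (eval e s1) (eval e s2) (eval e t1) (eval e t2).
Hypothesis gdt_elim : forall n (s1 s2 t1 t2 : term L 'I_n) pi,
  (forall A, V A -> forall e : 'I_n -> A, holds e pi ->
     gdt_holds gamma phi (eval e s1) (eval e s2) (eval e t1) (eval e t2)) ->
  V_entails_imp V pi t1 t2 s1 s2.
Hypothesis gdt_conservative : forall n (s1 s2 t1 t2 : term L 'I_n) pi (p q : term L 'I_n),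
  (forall A, V A -> forall (e : 'I_n -> A) (z : 'I_k -> A), holds e pi ->
     holds (zasg (eval e s1) (eval e s2) (eval e t1) (eval e t2) z) gamma -> eval e p = eval e q) ->
  V_entails V pi p q.
Variable Ts : fm L void -> Prop.
Hypothesis mcTs : model_completion (Th V) Ts.
Implicit Types A B C D : algebra L.

(* The universal closure of an equation of V is a universal sentence of Th V,
   hence a consequence of Ts. *)
Lemma models_Ts_V B : models (vd B) Ts -> V B.
Proof.
move=> MB; case: mcTs => _ univTs _; case: (varV) => E HE; apply/HE => -[l r] Elr e /=.
pose p := all_close (tvars l ++ tvars r) (FEq (tmap inl l) (tmap inl r)).
have sent_p : sentence p.
  move=> n /free_in_all_close [Hn Hocc]; apply: Hn; apply/In_cat.
  by case: Hocc => Hocc; have [m [<-] Hm] := occurs_tmap Hocc; [left|right]; exact: occurs_tvars.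
have Th_p : Th V p.
  split=> // A VA e'; apply: sat_all_close => e'' /=; rewrite !eval_tmap.
  by move: VA => /HE /(_ (l, r) Elr).
have := proj1 (univTs p sent_p (universal_all_close _ (univ_qf (qf_eq _ _))))
  (fun B' c' Mc' => Mc' p Th_p) B (vd B) MB e.
by move/all_close_sat => /=; rewrite !eval_tmap.
Qed.

(* A model of Ts together with the diagram of A. *)
Lemma embed_into_model A : V A ->
  exists B (h : A -> B), [/\ V B, models (vd B) Ts, hom h & injective h].
Proof.
move=> VA; case: mcTs => _ _ /(_ A) [|[B [c Mc]] _].
  by move=> p [_ Hp] e; exact: Hp.
have MB : models (vd B) Ts.
  move=> q Tq e; have := Mc _ (or_introl (ex_intro _ q (conj Tq erefl))) e.
  by rewrite sat_fm_map; congr sat; apply: functional_extensionality => -[].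
exists B, c; split=> //; first exact: models_Ts_V.
- move=> s f; pose t2 := App s (fun i => Var (f i)).
  have := Mc (FEq (tmap inr (Var (op A s f))) (tmap inr t2)) _ (fun _ => c (op A s f)).
  by rewrite sat_diagram_eq; apply; right; exists (Var (op A s f)), t2; left.
- move=> x y Exy; apply: NNPP => Nxy.
  have := Mc (FNeg (FEq (tmap inr (Var x)) (tmap inr (Var y)))) _ (fun _ => c x).
  by apply=> //; right; exists (Var x), (Var y); right.
Qed.

Definition gdt_index : 'I_4 + 'I_k -> nat := join_asg (@nat_of_ord 4) (fun j : 'I_k => 4 + j).

Definition gdt_counterexample_fm : fm L void :=
  ex_close (List.seq 4 k) (FAnd (fm_eqs gdt_index gamma) (FNeg (fm_eqs gdt_index phi))).

Lemma gdt_index_asg T (e : nat -> T) :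
  (fun v => e (gdt_index v)) = zasg (e 0) (e 1) (e 2) (e 3) (fun j => e (4 + j)).
Proof. by apply: functional_extensionality => -[[[|[|[|[|i]]]] Hi]|j]. Qed.

Lemma sat_gdt_counterexample_fm B (e : nat -> B) :
  sat (vd B) e gdt_counterexample_fm <->
  exists z, gdt_counterexample gamma phi (e 0) (e 1) (e 2) (e 3) z.
Proof.
rewrite /gdt_counterexample_fm sat_ex_close.
split=> [[e' He' [/sat_fm_eqs Hg Hp]]|[z [Hg Hp]]].
  have E4 n : n < 4 -> e' n = e n.
    by move=> n4; apply: He' => /List.in_seq [/leP]; rewrite leqNgt n4.
  have Ez : (fun v => e' (gdt_index v)) = zasg (e 0) (e 1) (e 2) (e 3) (fun j => e' (4 + j)).
    by rewrite gdt_index_asg !E4.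
  exists (fun j => e' (4 + j)); rewrite /gdt_counterexample -Ez.
  by split=> // H; apply: Hp; exact/sat_fm_eqs.
pose e' n := if n < 4 then e n else if insub (n - 4) is Some j then z j else e n.
have Ez : (fun v => e' (gdt_index v)) = zasg (e 0) (e 1) (e 2) (e 3) z.
  rewrite gdt_index_asg /e' /=; congr zasg.
  by apply: functional_extensionality => j; rewrite addKn valK.
exists e' => [n Hn|]; rewrite /e'.
  case: ltnP => // n4; rewrite insubN //; apply/negP => Hnk; apply: Hn; apply/List.in_seq.
  by split; [exact/leP|apply/leP; rewrite -(subnKC n4) ltn_add2l].
split; first by apply/sat_fm_eqs; rewrite Ez.
by move=> /sat_fm_eqs; rewrite Ez.
Qed.

(* A counterexample in an extension of B satisfies an existential formula in a
   model of Ts containing that extension; model completeness pulls it back to B. *)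
Lemma gdt_pcg B (a1 a2 b1 b2 : B) :
  V B -> models (vd B) Ts -> gdt_holds gamma phi a1 a2 b1 b2 -> pcg b1 b2 a1 a2.
Proof.
move=> VB MB Hgdt; apply: NNPP => Hnpcg.
have [C [h [z [VC hh ih Hcex]]]] := gdt_counterexample_ext varV gdt_elim gdt_conservative VB Hnpcg.
have [D [c [VD MD hc ic]]] := embed_into_model VC.
pose e n := nth a1 [:: a1; a2; b1; b2] n.
have : sat (vd D) (fun n => c (h (e n))) gdt_counterexample_fm.
  by apply/sat_gdt_counterexample_fm; exists (fun j => c (z j)); exact: gdt_counterexample_emb.
case: mcTs => mcT _ _.
rewrite -(mcT B D MB MD _ (fun x y Exy => ih _ _ (ic _ _ Exy)) (hom_comp hh hc)).
by move=> /sat_gdt_counterexample_fm [z' [Hg Hp]]; apply: Hp; exact: Hgdt.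
Qed.

Lemma models_ultra I (U : (I -> Prop) -> Prop) (B : I -> algebra L) :
  ultrafilter U -> (forall i, models (vd (B i)) Ts) -> models (vd (ultra_alg U B)) Ts.
Proof.
move=> ultraU MB q Tq e.
have -> : e = fun n => qclass (ueq U B) (qrepr (e n)).
  by apply: functional_extensionality => n; rewrite qreprK.
apply/(los ultraU (fun i => inhabited_alg (B i) const)); apply: (ultra_all ultraU) => i.
exact: MB.
Qed.

Lemma pcg_ultra I (U : (I -> Prop) -> Prop) (A : I -> algebra L) (a1 a2 b1 b2 : pi_alg A) :
  ultrafilter U -> (forall i, V (A i)) -> (forall i, pcg (b1 i) (b2 i) (a1 i) (a2 i)) ->
  pcg (A := ultra_alg U A) (qclass _ b1) (qclass _ b2) (qclass _ a1) (qclass _ a2).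
Proof.
move=> ultraU VA Hpcg.
have /dep_choice [Bh HBh] : forall i, exists Bh : {B : algebra L & A i -> B},
    [/\ V (projT1 Bh), models (vd (projT1 Bh)) Ts, hom (projT2 Bh) & injective (projT2 Bh)].
  by move=> i; have [B [h HBh]] := embed_into_model (VA i); exists (existT _ B h).
pose B i := projT1 (Bh i); pose h i : A i -> B i := projT2 (Bh i).
have VB i : V (B i) by case: (HBh i).
have MB i : models (vd (B i)) Ts by case: (HBh i).
have hh i : hom (h i) by case: (HBh i).
have [j [hj ij jE]] := ultra_emb ultraU hh (fun i => let: And4 _ _ _ hi := HBh i in hi).
have VUB : V (ultra_alg U B) := V_quot varV (ueq_congruence B ultraU) (V_pi varV VB).
apply: (pcg_emb cepV VUB hj ij); rewrite !jE.
apply: (gdt_pcg VUB (models_ultra ultraU MB)); apply: (gdt_holds_ultra ultraU) => i.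
exact: (pcg_gdt cepV gdt_intro (VB i) (pcg_hom (hh i) (Hpcg i))).
Qed.

Lemma not_pcg_ultra I (U : (I -> Prop) -> Prop) (A : I -> algebra L) (a1 a2 b1 b2 : pi_alg A) :
  ultrafilter U -> (forall i, V (A i)) -> (forall i, ~ pcg (b1 i) (b2 i) (a1 i) (a2 i)) ->
  ~ pcg (A := ultra_alg U A) (qclass _ b1) (qclass _ b2) (qclass _ a1) (qclass _ a2).
Proof.
move=> ultraU VA Hnpcg Hpcg.
have /dep_choice [Chz HChz] :
    forall i, exists Chz : {C : algebra L & ((A i -> C) * ('I_k -> C))%type},
    let: existT C (h, z) := Chz in
    [/\ V C, hom h, injective h &
      gdt_counterexample gamma phi (h (a1 i)) (h (a2 i)) (h (b1 i)) (h (b2 i)) z].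
  move=> i; have [C [h [z Hhz]]] :=
    gdt_counterexample_ext varV gdt_elim gdt_conservative (VA i) (Hnpcg i).
  by exists (existT _ C (h, z)).
pose C i := projT1 (Chz i); pose h i : A i -> C i := (projT2 (Chz i)).1.
pose z j : pi_alg C := fun i => (projT2 (Chz i)).2 j.
have HC i : [/\ V (C i), hom (h i), injective (h i) &
    gdt_counterexample gamma phi
      (h i (a1 i)) (h i (a2 i)) (h i (b1 i)) (h i (b2 i)) (fun j => z j i)].
  by move: (HChz i); rewrite /C /h /z; case: (Chz i) => ? [].
have VC i : V (C i) by case: (HC i).
have [j [hj ij jE]] := ultra_emb ultraU (h := h)
  (fun i => let: And4 _ hi _ _ := HC i in hi) (fun i => let: And4 _ _ hi _ := HC i in hi).
have VUC : V (ultra_alg U C) := V_quot varV (ueq_congruence C ultraU) (V_pi varV VC).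
have := pcg_gdt cepV gdt_intro VUC (pcg_hom hj Hpcg); rewrite !jE => Hgdt.
have Hcex i : gdt_counterexample gamma phi
    (h i (a1 i)) (h i (a2 i)) (h i (b1 i)) (h i (b2 i)) (fun j => z j i) by case: (HC i).
have [Hg Hp] := @gdt_counterexample_ultra L k gamma phi I U C ultraU
  (fun i => h i (a1 i)) (fun i => h i (a2 i)) (fun i => h i (b1 i)) (fun i => h i (b2 i)) z Hcex.
exact: Hp (Hgdt _ Hg).
Qed.

End ModelCompletion.

(** * Compactness *)

Section Quads.
Variable L : language.

Record quad := Quad { qalg : algebra L; qa1 : qalg; qa2 : qalg; qb1 : qalg; qb2 : qalg }.

Definition qasg (x : quad) := asg4 (qa1 x) (qa2 x) (qb1 x) (qb2 x).

Definition qsat (x : quad) (eps : term L 'I_4 * term L 'I_4) :=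
  eval (qasg x) eps.1 = eval (qasg x) eps.2.

Definition unit_quad := @Quad (unit_alg L) tt tt tt tt.

Definition prod_quad (x y : quad) :=
  @Quad (prod_alg (qalg x) (qalg y)) (qa1 x, qa1 y) (qa2 x, qa2 y) (qb1 x, qb1 y) (qb2 x, qb2 y).

Definition big_prod_quad (xs : seq quad) := foldr prod_quad unit_quad xs.

Definition ultra_quad I (U : (I -> Prop) -> Prop) (Q : I -> quad) :=
  let uclass (f : pi_alg (fun i => qalg (Q i))) : ultra_alg U _ := qclass _ f in
  @Quad (ultra_alg U (fun i => qalg (Q i)))
    (uclass (fun i => qa1 (Q i))) (uclass (fun i => qa2 (Q i)))
    (uclass (fun i => qb1 (Q i))) (uclass (fun i => qb2 (Q i))).

Lemma qsat_prod x y eps : qsat (prod_quad x y) eps <-> qsat x eps /\ qsat y eps.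
Proof.
rewrite /qsat !eval_prod.
have -> : (fun v => (qasg (prod_quad x y) v).1) = qasg x.
  by apply: functional_extensionality => v; rewrite (asg4_map fst).
have -> : (fun v => (qasg (prod_quad x y) v).2) = qasg y.
  by apply: functional_extensionality => v; rewrite (asg4_map snd).
by split=> [[]|[-> ->]].
Qed.

Lemma qsat_big_prod xs x eps : List.In x xs -> qsat (big_prod_quad xs) eps -> qsat x eps.
Proof.
elim: xs => [|y xs IH] //= Hx /qsat_prod [Hy Hxs].
by case: Hx => [<-|/IH]; [|apply].
Qed.

Lemma qsat_ultra I (U : (I -> Prop) -> Prop) (Q : I -> quad) eps :
  ultrafilter U -> qsat (ultra_quad U Q) eps <-> U (fun i => qsat (Q i) eps).
Proof.
move=> ultraU; rewrite /qsat; set A := fun i => qalg (Q i).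
pose f1 : pi_alg A := fun i => qa1 (Q i); pose f2 : pi_alg A := fun i => qa2 (Q i).
pose g1 : pi_alg A := fun i => qb1 (Q i); pose g2 : pi_alg A := fun i => qb2 (Q i).
have -> : qasg (ultra_quad U Q) = fun v => qclass (ueq U A) (asg4 f1 f2 g1 g2 v).
  by apply: functional_extensionality => v; rewrite (asg4_map (qclass (ueq U A))).
rewrite !(eval_ultra ultraU) (uclass_eq ultraU).
have E i : (fun x => asg4 f1 f2 g1 g2 x i) = qasg (Q i).
  by apply: functional_extensionality => v; rewrite (asg4_map (fun f : pi_alg A => f i)).
by split=> H; apply: (ultra_mono ultraU H) => i; rewrite E.
Qed.

End Quads.

Section Compactness.
Variables (L : language) (V : algebra L -> Prop).
Hypothesis varV : is_variety V.
Hypothesis cepV : CEP V.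
Hypothesis cdV : congruence_distributive V.
Hypothesis pcg_ultra_closed : forall I (U : (I -> Prop) -> Prop) (A : I -> algebra L)
    (a1 a2 b1 b2 : pi_alg A),
  ultrafilter U -> (forall i, V (A i)) -> (forall i, pcg (b1 i) (b2 i) (a1 i) (a2 i)) ->
  pcg (A := ultra_alg U A) (qclass _ b1) (qclass _ b2) (qclass _ a1) (qclass _ a2).
Hypothesis not_pcg_ultra_closed : forall I (U : (I -> Prop) -> Prop) (A : I -> algebra L)
    (a1 a2 b1 b2 : pi_alg A),
  ultrafilter U -> (forall i, V (A i)) -> (forall i, ~ pcg (b1 i) (b2 i) (a1 i) (a2 i)) ->
  ~ pcg (A := ultra_alg U A) (qclass _ b1) (qclass _ b2) (qclass _ a1) (qclass _ a2).

Definition pcg_quad (x : quad L) := V (qalg x) /\ pcg (qb1 x) (qb2 x) (qa1 x) (qa2 x).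

Definition pcg_valid (eps : term L 'I_4 * term L 'I_4) := forall x, pcg_quad x -> qsat x eps.

Lemma pcg_quad_big_prod xs : (forall x, List.In x xs -> pcg_quad x) -> pcg_quad (big_prod_quad xs).
Proof.
elim: xs => [|x xs IH] Hxs /=.
  by split; [exact: V_unit varV|move=> R congR _; exact: cong_refl].
have [VX Hx] := Hxs x (or_introl erefl); have [VXs Hxs'] := IH (fun y Hy => Hxs y (or_intror Hy)).
split; [exact: (V_prod varV VX VXs)|exact: (pcg_prod varV cdV VX VXs Hx Hxs')].
Qed.

Lemma V_ultra_quad I (U : (I -> Prop) -> Prop) (Q : I -> quad L) :
  ultrafilter U -> (forall i, V (qalg (Q i))) -> V (qalg (ultra_quad U Q)).
Proof. by move=> ultraU VQ; apply: (V_quot varV (ueq_congruence _ ultraU)); exact: V_pi. Qed.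

Lemma pcg_quad_transfer x y :
  pcg_quad y -> V (qalg x) -> (forall eps, qsat y eps -> qsat x eps) -> pcg_quad x.
Proof.
move=> [VY Hy] VX Hsat; split=> //.
by apply: (pcg_transfer cepV VY Hy) => t t'; exact: (Hsat (t, t')).
Qed.

(* For each equation failing at x pick a member of K where it fails; an
   ultraproduct of finite products of these is in K and satisfies only equations
   true at x. *)
Lemma pcg_quad_of_valid x :
  V (qalg x) -> (forall eps, pcg_valid eps -> qsat x eps) -> pcg_quad x.
Proof.
move=> VX Hvalid.
have /choice [w Hw] : forall eps, exists y, pcg_quad y /\ (~ qsat x eps -> ~ qsat y eps).
  move=> eps; case: (classic (qsat x eps)) => Hx.
    by exists (unit_quad L); split=> //; exact: (pcg_quad_big_prod (xs := [::])).
  apply: NNPP => Hno; apply: Hx; apply: Hvalid => y Ky; apply: NNPP => Hy; apply: Hno; by exists y.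
have [U [ultraU Uin]] := ultrafilter_seq_In (term L 'I_4 * term L 'I_4).
pose M l := big_prod_quad (map w l).
have pcgM l : pcg_quad (M l).
  by apply: pcg_quad_big_prod => y /List.in_map_iff [eps [<- _]]; case: (Hw eps).
have pcgZ : pcg_quad (ultra_quad U M).
  split; first by apply: V_ultra_quad => // l; case: (pcgM l).
  by apply: pcg_ultra_closed => // l; case: (pcgM l).
apply: (pcg_quad_transfer pcgZ) => // eps /(qsat_ultra _ _ ultraU) HU; apply: NNPP => Hx.
case: (ultraU) => _ _ U0 _; apply: U0.
apply: (ultra_mono ultraU (proj2 (ultra_and ultraU _ _) (conj HU (Uin eps)))) => l [HMl Hl].
exact: (proj2 (Hw eps) Hx (qsat_big_prod (List.in_map w l eps Hl) HMl)).
Qed.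

(* Otherwise every finite set of K-valid equations has a model outside K, and an
   ultraproduct of these is outside K but satisfies every K-valid equation. *)
Theorem EDPC_of_ultra_closed : EDPC V.
Proof.
apply: NNPP => HnEDPC.
pose valid_eqs l := [seq eps <- l | is_left (excluded_middle_informative (pcg_valid eps))].
have valid_eqsP l eps : List.In eps (valid_eqs l) <-> List.In eps l /\ pcg_valid eps.
  by rewrite List.filter_In; case: excluded_middle_informative => /= Hvalid; split=> -[].
have /choice [Q HQ] : forall l, exists x,
    [/\ V (qalg x), holds (qasg x) (valid_eqs l) & ~ pcg (qb1 x) (qb2 x) (qa1 x) (qa2 x)].
  move=> l; apply: NNPP => Hno; apply: HnEDPC; exists (valid_eqs l) => A VA a1 a2 b1 b2; split.
  - move=> Hpcg; apply/holdsP => eps /valid_eqsP [_ Hvalid]; exact: (Hvalid (Quad a1 a2 b1 b2)).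
  - by move=> Hh; apply: NNPP => Hnpcg; apply: Hno; exists (Quad a1 a2 b1 b2).
have [U [ultraU Uin]] := ultrafilter_seq_In (term L 'I_4 * term L 'I_4).
have VQ l : V (qalg (Q l)) by case: (HQ l).
have Hsat eps : pcg_valid eps -> qsat (ultra_quad U Q) eps.
  move=> Hvalid; apply/(qsat_ultra _ _ ultraU); apply: (ultra_mono ultraU (Uin eps)) => l Hl.
  by case: (HQ l) => _ /holdsP Hh _; apply: Hh; apply/valid_eqsP.
have [_ Hpcg] := pcg_quad_of_valid (V_ultra_quad ultraU VQ) Hsat.
by apply: (not_pcg_ultra_closed ultraU VQ _ Hpcg) => l; case: (HQ l).
Qed.

End Compactness.

Theorem theorem5p7 (L : language) (V : algebra L -> Prop) :
  (exists s : sym L, ar s = 0) ->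
  is_variety V ->
  congruence_distributive V ->
  CEP V ->
  guarded_deduction_theorem V ->
  (exists Ts : fm L void -> Prop, model_completion (Th V) Ts) ->
  EDPC V.
Proof.
move=> const varV cdV cepV [k [gamma [phi gdtV]]] [Ts mcTs].
have gdt_intro n s1 s2 t1 t2 pi := proj1 (proj1 (gdtV n s1 s2 t1 t2 pi)).
have gdt_elim n s1 s2 t1 t2 pi := proj2 (proj1 (gdtV n s1 s2 t1 t2 pi)).
have gdt_conservative n s1 s2 t1 t2 pi (p q : term L 'I_n) :=
  proj1 (proj2 (gdtV n s1 s2 t1 t2 pi) (p, q)).
apply: (EDPC_of_ultra_closed varV cepV cdV) => I U A a1 a2 b1 b2 ultraU VA.
- exact: (pcg_ultra const varV cepV gdt_intro gdt_elim gdt_conservative mcTs ultraU VA).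
- exact: (not_pcg_ultra varV cepV gdt_intro gdt_elim gdt_conservative ultraU VA).
Qed.
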